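(* Let $a,b$ be positive integers and $c$ an integer with $-b<c<a$, and suppose that $E_{(-b,c,a)}^{(\infty,\infty,\infty)}=\bigoplus_{r\in\mathbb{Z}}A_r$ is of full support. Then for every even integer $r$, the component $A_r$ contains infinitely many monomials of even length with pairwise disjoint supports.
   Context: $E$ is the Grassmann algebra of an infinite-dimensional vector space with basis $e_1,e_2,\dots$; monomials are $1$ and $e_{i_1}\cdots e_{i_k}$ with $i_1<\dots<i_k$, of length $k$ and support $\{e_{i_1},\dots,e_{i_k}\}$. For pairwise distinct integers $r_1,r_2,r_3$, $E_{(r_1,r_2,r_3)}^{(\infty,\infty,\infty)}=\bigoplus_rA_r$ is the $\mathbb{Z}$-grading obtained by splitting $\{e_i\}$ into three disjoint infinite sets, giving elements of the $j$-th set degree $r_j$ and monomials the sum of the degrees of their factors. Full support means $A_r\ne0$ for every $r\in\mathbb{Z}$. *)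

From HB Require Import structures.
From mathcomp Require Import all_boot all_order all_algebra.
From mathcomp Require Import finmap.
Set Implicit Arguments. Unset Strict Implicit. Unset Printing Implicit Defensive.
Import Order.TTheory GRing.Theory Num.Theory.
Local Open Scope ring_scope.
Local Open Scope fset_scope.

(* Generators of the Grassmann algebra E are e_0, e_1, e_2, ... (indexed by nat).
   A monomial e_{i_1}...e_{i_k} (i_1 < ... < i_k) is determined by its support,
   the finite set {i_1,...,i_k}; the empty support is the monomial 1. *)
Definition monomial := {fset nat}.

Definition mlength (m : monomial) : nat := #|` m|.

(* A splitting of the generators into three pairwise disjoint infinite sets:
   p i = j means e_i lies in the j-th set.  Each set must be infinite. *)
Definition three_infinite_split (p : nat -> 'I_3) : Prop :=
  forall (j : 'I_3) (N : nat), exists i : nat, (N <= i)%N /\ p i = j.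

Definition gen_deg (r1 r2 r3 : int) (p : nat -> 'I_3) (i : nat) : int :=
  match val (p i) with 0%N => r1 | 1%N => r2 | _ => r3 end.

Definition mdeg (r1 r2 r3 : int) (p : nat -> 'I_3) (m : monomial) : int :=
  \sum_(i <- m) gen_deg r1 r2 r3 p i.

(* A_r is spanned by the monomials of degree r; a monomial lies in A_r iff
   its degree is r. *)
Definition in_component (r1 r2 r3 : int) (p : nat -> 'I_3) (r : int)
  (m : monomial) : Prop := mdeg r1 r2 r3 p m = r.

(* Full support: A_r <> 0 for every r, i.e. every A_r contains a monomial
   (A_r is the span of the monomials of degree r). *)
Definition full_support (r1 r2 r3 : int) (p : nat -> 'I_3) : Prop :=
  forall r : int, exists m : monomial, in_component r1 r2 r3 p r m.

From HB Require Import structures.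
From mathcomp Require Import all_boot all_order all_algebra.
From mathcomp Require Import finmap.
Import Order.TTheory GRing.Theory Num.Theory.
Local Open Scope ring_scope.
Local Open Scope fset_scope.

(* Since r is even, a monomial of degree r/2 (full support) gives a word of
   generator classes of total degree r/2; padding it with a generators of
   degree -b and b of degree a keeps the degree and makes the word nonempty,
   and doubling it makes the degree r and the length even.  Every class is
   infinite, so the doubled word can be realised again and again by fresh
   generators lying beyond all those used before. *)

Section FreshGenerators.

Context {T : eqType} {p : nat -> T}.
Hypothesis p_unbounded : forall (j : T) (N : nat), exists i, (N <= i)%N /\ p i = j.

Lemma exists_fresh (j : T) (N : nat) : exists i, (N <= i)%N && (p i == j).
Proof. by have [i [le_Ni /eqP pi]] := p_unbounded j N; exists i; rewrite le_Ni. Qed.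

Definition fresh (j : T) (N : nat) : nat := ex_minn (exists_fresh j N).

Lemma fresh_spec (j : T) (N : nat) : (N <= fresh j N)%N /\ p (fresh j N) = j.
Proof. by rewrite /fresh; case: ex_minnP => i /andP[? /eqP]. Qed.

Fixpoint realize (w : seq T) (N : nat) : {fset nat} :=
  if w is j :: w' then fresh j N |` realize w' (fresh j N).+1 else fset0.

Lemma realize_ge (w : seq T) (N i : nat) : i \in realize w N -> (N <= i)%N.
Proof.
elim: w N => [|j w IHw] N /=; first by rewrite inE.
have [le_N_fresh _] := fresh_spec j N.
rewrite !inE => /predU1P[-> // | /IHw lt_fresh_i].
exact/(leq_trans le_N_fresh)/ltnW.
Qed.

Lemma fresh_notin_realize (j : T) (w : seq T) (N : nat) :
  fresh j N \notin realize w (fresh j N).+1.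
Proof. by apply/negP => /realize_ge; rewrite ltnn. Qed.

Lemma card_realize (w : seq T) (N : nat) : #|` realize w N| = size w.
Proof.
elim: w N => [|j w IHw] N //=.
by rewrite cardfsU1 fresh_notin_realize IHw.
Qed.

Lemma sum_realize (V : nmodType) (F : T -> V) (w : seq T) (N : nat) :
  \sum_(i <- realize w N) F (p i) = \sum_(j <- w) F j.
Proof.
elim: w N => [|j w IHw] N /=; first by rewrite !big_nil.
rewrite big_fsetU1 ?fresh_notin_realize //= IHw big_cons.
by have [_ ->] := fresh_spec j N.
Qed.

End FreshGenerators.

Section DisjointFamily.

Variable gen : nat -> {fset nat}.
Hypothesis gen_ge : forall N i, i \in gen N -> (N <= i)%N.

Fixpoint threshold (k : nat) : nat :=
  if k is k'.+1 then (threshold k' + (\max_(i <- gen (threshold k')) i).+1)%N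
  else 0%N.

Lemma threshold_homo : {homo threshold : k l / (k <= l)%N}.
Proof. by apply: homo_leq leqnn leq_trans _ => k; apply: leq_addr. Qed.

Lemma gen_threshold_lt {k i : nat} : i \in gen (threshold k) -> (i < threshold k.+1)%N.
Proof.
move=> i_in; rewrite /= addnS ltnS.
exact: leq_trans (leq_bigmax_seq _ i_in _) (leq_addl _ _).
Qed.

Definition disjoint_family (k : nat) : {fset nat} := gen (threshold k).

Lemma disjoint_family_lt (k l : nat) :
  (k < l)%N -> disjoint_family k `&` disjoint_family l = fset0.
Proof.
move=> lt_kl; apply/fsetP => i; rewrite !inE; apply/negbTE/andP => -[ik il].
have := leq_trans (gen_threshold_lt ik) (threshold_homo _ _ lt_kl).
by rewrite ltnNge (gen_ge _ _ il).
Qed.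

Lemma disjoint_familyI (k l : nat) :
  k <> l -> disjoint_family k `&` disjoint_family l = fset0.
Proof.
case: (ltngtP k l) => [lt_kl | lt_lk | ->] // _; first exact: disjoint_family_lt.
by rewrite fsetIC disjoint_family_lt.
Qed.

End DisjointFamily.

Lemma disjoint_nonempty_inj (K : choiceType) (I : eqType) (m : I -> {fset K}) :
  (forall k, m k != fset0) -> (forall k l, k <> l -> m k `&` m l = fset0) ->
  injective m.
Proof.
move=> m_neq0 m_disj k l eq_m; apply/eqP/negPn/negP => /eqP neq_kl.
by move: (m_neq0 l); rewrite -[m l]fsetIid -{1}eq_m m_disj ?eqxx.
Qed.

Lemma sumr_nseq (V : nmodType) (I : Type) (F : I -> V) (n : nat) (x : I) :
  \sum_(i <- nseq n x) F i = F x *+ n.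
Proof. by elim: n => [|n IHn]; rewrite ?big_nil // big_cons IHn mulrS. Qed.

Definition class_deg (r1 r2 r3 : int) (j : 'I_3) : int :=
  match val j with 0%N => r1 | 1%N => r2 | _ => r3 end.

Lemma mdeg_realize (r1 r2 r3 : int) (p : nat -> 'I_3) (p_split : three_infinite_split p)
  (w : seq 'I_3) (N : nat) :
  mdeg r1 r2 r3 p (realize p_split w N) = \sum_(j <- w) class_deg r1 r2 r3 j.
Proof. exact: (sum_realize p_split _ (class_deg r1 r2 r3) w N). Qed.

Definition balanced_padding (a b : nat) : seq 'I_3 := nseq a 0 ++ nseq b 2.

Lemma sum_balanced_padding (a b : nat) (c : int) :
  \sum_(j <- balanced_padding a b) class_deg (- b%:Z) c a%:Z j = 0.
Proof.
rewrite big_cat !sumr_nseq /class_deg /=.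
by rewrite mulNrn -!natz -!mulrnA mulnC addNr.
Qed.

Lemma even_word_of_even_degree {a b : nat} {c : int} {p : nat -> 'I_3} {r : int} :
  (0 < a)%N -> full_support (- b%:Z) c a%:Z p -> ~~ odd `|r|%N ->
  exists w : seq 'I_3,
    [/\ \sum_(j <- w) class_deg (- b%:Z) c a%:Z j = r, (0 < size w)%N & ~~ odd (size w)].
Proof.
move=> a_gt0 full r_even.
have [m deg_m] := full (r %/ 2)%Z.
pose half := [seq p i | i <- m] ++ balanced_padding a b.
have deg_half : \sum_(j <- half) class_deg (- b%:Z) c a%:Z j = (r %/ 2)%Z.
  by rewrite big_cat /= sum_balanced_padding addr0 big_map; apply: deg_m.
exists (half ++ half); split.
- have two_dvd_r : (2 %| r)%Z by rewrite dvdzE dvdn2.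
  by rewrite big_cat /= deg_half -[RHS](divzK two_dvd_r) -mulr2n mulr_natr.
- by rewrite !size_cat size_nseq -addnA addnCA !ltn_addr.
- by rewrite size_cat addnn odd_double.
Qed.

Theorem lemma4p7 (a b : nat) (c : int) (p : nat -> 'I_3) :
  (0 < a)%N -> (0 < b)%N ->
  - (b%:Z) < c -> c < a%:Z ->
  three_infinite_split p ->
  full_support (- (b%:Z)) c (a%:Z) p ->
  forall r : int, ~~ odd `|r|%N ->
  exists m : nat -> monomial,
    injective m /\
    (forall k, in_component (- (b%:Z)) c (a%:Z) p r (m k) /\ ~~ odd (mlength (m k))) /\
    (forall k l, k <> l -> m k `&` m l = fset0).
Proof.
move=> a_gt0 _ _ _ p_split full r r_even.
have [w [deg_w size_w_gt0 size_w_even]] := even_word_of_even_degree a_gt0 full r_even.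
pose m := disjoint_family (realize p_split w).
have m_disj := @disjoint_familyI _ (realize_ge p_split w).
have card_m k : #|` m k| = size w by apply: card_realize.
exists m; split; last split => // k.
- apply: disjoint_nonempty_inj m_disj => k.
  by rewrite -cardfs_gt0 card_m.
- by rewrite /in_component /mlength card_m mdeg_realize deg_w.
Qed.
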